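(* Let $t\in(0,1)$. For all $\eta$ sufficiently close to $t$, all $\theta\in\mathbb R/2\pi\mathbb Z$ and $z\in\mathbb H$, the function $P\mapsto|K_\eta(z,P)|$ has a unique maximum point on $\Sigma_{t,\theta}$.
   Context: $\mathbb H=\{x+iy:y>0\}$; $\mathbb H^{\mathbb C}=\mathbb C^2\ni P=(X(P),Y(P))$ with $\mathbb H$ embedded as real points; $Z=X+iY$, $\tilde Z=X-iY$; $\cosh\mathrm{dist}(x+iy,P):=1+\frac{(x-X)^2+(y-Y)^2}{2yY}$. For $\eta\in(0,1)$, $c_\eta=\frac4{4\eta-\eta^3}$ and $K_\eta(z,P)=\frac{z-\tilde Z(P)}{\bar z-Z(P)}e^{-c_\eta\cosh\mathrm{dist}(z,P)}$. $h_t(z,\theta)$: point at time $t$ of the unit-speed right horocycle (image of $t\mapsto -t+i$ under an orientation-preserving isometry) starting at $z=x+iy$ with velocity $y(\cos\theta\partial_x+\sin\theta\partial_y)$, continued holomorphically to complex $t$ with $|\Im t|<1$ as a point of $\mathbb C^2$. $\Sigma_{t,\theta}:=\{h_{-it}(z,\theta):z\in\mathbb H\}$. *)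

From Stdlib Require Import Reals.
From Coquelicot Require Import Coquelicot.
Open Scope R_scope.

Definition cexp (w : C) : C := (exp (Re w) * cos (Im w), exp (Re w) * sin (Im w)).

(* Points of H^C = C^2 : P = (X(P), Y(P)). *)
Definition PX (P : C * C) : C := fst P.
Definition PY (P : C * C) : C := snd P.
Definition PZ (P : C * C) : C := (PX P + Ci * PY P)%C.
Definition PZt (P : C * C) : C := (PX P - Ci * PY P)%C.

Definition cosh_dist (z : C) (P : C * C) : C :=
  (1 + ((RtoC (Re z) - PX P) * (RtoC (Re z) - PX P)
        + (RtoC (Im z) - PY P) * (RtoC (Im z) - PY P))
       / (2 * RtoC (Im z) * PY P))%C.

Definition c_eta (eta : R) : R := 4 / (4 * eta - eta ^ 3).

Definition K_eta (eta : R) (z : C) (P : C * C) : C :=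
  ((z - PZt P) / (Cconj z - PZ P) * cexp (- RtoC (c_eta eta) * cosh_dist z P))%C.

(* Rotation about i by angle phi (an element of PSL_2(R) fixing i, whose
   differential at i is multiplication by e^{i phi}):
   k_phi(w) = (cos(phi/2) w + sin(phi/2)) / (-sin(phi/2) w + cos(phi/2)),
   evaluated at complex w. *)
Definition rot_i (phi : R) (w : C) : C :=
  ((RtoC (cos (phi / 2)) * w + RtoC (sin (phi / 2)))
   / (- RtoC (sin (phi / 2)) * w + RtoC (cos (phi / 2))))%C.

(* The orientation-preserving isometry g(w) = x + y k_{theta - pi}(w) maps i to
   z = x+iy and the unit vector -d_x at i to y(cos theta d_x + sin theta d_y).
   Hence the unit-speed right horocycle is h_s(z,theta) = g(-s + i), s real.
   Its coordinates, for real s, are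
     X = x + y (k(-s+i) + k(-s-i))/2,   Y = y (k(-s+i) - k(-s-i))/(2i)
   (k has real coefficients, so k(-s-i) = conj k(-s+i)); these expressions are
   holomorphic in s, and give the holomorphic continuation to complex s with
   |Im s| < 1 as a point of C^2. *)
Definition horo (s : C) (z : C) (theta : R) : C * C :=
  let k := rot_i (theta - PI) in
  let a := k (- s + Ci)%C in
  let b := k (- s - Ci)%C in
  ((RtoC (Re z) + RtoC (Im z) * (a + b) / 2)%C,
   (RtoC (Im z) * (a - b) / (2 * Ci))%C).

Definition Sigma (t theta : R) (P : C * C) : Prop :=
  exists w : C, 0 < Im w /\ P = horo (- (Ci * RtoC t))%C w theta.

(* Write P = h_{-it}(x+iy, theta) and pull z back by the isometry
   g(xi) = x + y k_{theta-pi}(xi) (isom x y (theta - PI)) that defines the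
   horocycle: z = g(u+iv).  Then Z(P) = g(i(1+t)) and Ztilde(P) = g(i(t-1)), and
   cosh dist(z, P) is a cross ratio of z, conj z, Z(P), Ztilde(P), hence
   invariant under g.  So |K_eta(z, P)| = horo_scale * weight u v, where the
   scale does not depend on x + iy and
     weight u v = sqrt((u^2 + (v+1-t)^2) / (u^2 + (v+1+t)^2)) * exp(-c (u^2+v^2+1-t^2) / (2v)).
   On each circle where the first factor is constant, the exponent decreases
   with the height v, which pushes the maximum of weight onto the axis u = 0;
   there the derivative changes sign exactly once, so weight has a unique
   maximiser (0, vs).  Since g is determined by g(i vs) = z, the maximiser on
   Sigma is unique.  Closeness of eta to t only serves to make c_eta > 0. *)

From Stdlib Require Import Reals Lra Psatz.
From Coquelicot Require Import Coquelicot.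
Open Scope R_scope.

Section Profile.
Variables t c : R.
Hypothesis ht : 0 < t < 1.
Hypothesis hc : 0 < c.

Definition exponent (u v : R) : R := (u*u + v*v + 1 - t*t) / (2*v).

Definition ratio (u v : R) : R :=
  (u*u + (v+1-t)*(v+1-t)) / (u*u + (v+1+t)*(v+1+t)).

Definition weight (u v : R) : R := sqrt (ratio u v) * exp (- c * exponent u v).

Definition profile (v : R) : R := (v+1-t) / (v+1+t) * exp (- c * exponent 0 v).

Definition profile_num (v : R) : R :=
  c * (v*v - (1 - t*t)) * (v*v + 2*v + (1 - t*t)) - 4*t*(v*v).

Lemma profile_num_neg (v : R) : 0 < v -> v*v <= 1 - t*t -> profile_num v < 0.
Proof.
  intros hv hvr. unfold profile_num.
  assert (c * (v*v - (1 - t*t)) * (v*v + 2*v + (1 - t*t)) <= 0).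
  { apply Rmult_le_0_r; nra. }
  assert (0 < t * (v*v)) by (apply Rmult_lt_0_compat; nra).
  lra.
Qed.

(* That is, profile_num v / v^2 increases for v^2 >= 1 - t^2: profile_num changes sign once. *)
Lemma profile_num_ratio_lt (a b : R) :
  1 - t*t <= a*a -> 0 < a < b -> profile_num a * (b*b) < profile_num b * (a*a).
Proof.
  intros ha hab. unfold profile_num.
  assert (hs : 0 < 1 - t*t) by nra.
  set (s := 1 - t*t) in *. clearbody s.
  assert (eab : a*a < b*b) by nra.
  assert (e2 : (a*a - s)*(b*b) < (b*b - s)*(a*a)) by nra.
  assert (e3 : 0 < a*a + 2*a + s) by nra.
  assert (e4 : a*a + 2*a + s < b*b + 2*b + s) by nra.
  assert (e5 : (a*a - s)*(b*b) * (a*a + 2*a + s) < (b*b - s)*(a*a) * (b*b + 2*b + s)).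
  { assert (0 <= (a*a - s)*(b*b)) by (apply Rmult_le_pos; nra). nra. }
  nra.
Qed.

Lemma profile_num_sign : exists vs, 0 < vs /\
  (forall v, 0 < v < vs -> profile_num v < 0) /\ (forall v, vs < v -> 0 < profile_num v).
Proof.
  set (r := sqrt (1 - t*t)).
  assert (hr2 : r * r = 1 - t*t) by (apply sqrt_sqrt; nra).
  assert (hr0 : 0 < r) by (apply sqrt_lt_R0; nra).
  (* At V, c (V^2 - r^2) > 4 t and V^2 + 2 V + r^2 > V^2. *)
  set (V := 1 + r + 4*t/c).
  assert (h4 : 0 < 4*t/c) by (apply Rdiv_lt_0_compat; lra).
  assert (hc4 : c * (4*t/c) = 4*t) by (field; lra).
  assert (hcont : continuity profile_num).
  { intros x. apply derivable_continuous_pt. unfold profile_num. reg. }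
  assert (hgr : profile_num r < 0) by (apply profile_num_neg; lra).
  assert (hgV : 0 < profile_num V).
  { unfold profile_num. assert (V*V - (1-t*t) > 4*t/c) by (unfold V in *; nra).
    assert (c * (V*V - (1-t*t)) > 4*t) by nra.
    assert (1 <= V) by (unfold V; lra).
    nra. }
  destruct (IVT profile_num r V hcont ltac:(unfold V; lra) hgr hgV)
    as [vs [[h1 h2] h0]].
  assert (hvs : r < vs) by (destruct h1 as [h1|h1]; [lra | subst; lra]).
  exists vs; repeat split; try lra.
  - intros v [hv1 hv2].
    destruct (Rle_lt_dec v r) as [hvr|hvr]; [apply profile_num_neg; nra|].
    pose proof (profile_num_ratio_lt v vs ltac:(nra) ltac:(lra)). nra.
  - intros v hv. pose proof (profile_num_ratio_lt vs v ltac:(nra) ltac:(lra)). nra.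
Qed.

Definition profile_gain (v : R) : R :=
  exp (- c * exponent 0 v) / (2*(v*v)*((v+1+t)*(v+1+t))).

Lemma profile_gain_pos (v : R) : 0 < v -> 0 < profile_gain v.
Proof. intros hv. apply Rdiv_lt_0_compat; [apply exp_pos | apply Rmult_lt_0_compat; nra]. Qed.

Lemma derivable_profile (v : R) : 0 < v ->
  derivable_pt_lim profile v (- profile_gain v * profile_num v).
Proof.
  intros hv. apply is_derive_Reals. unfold profile, profile_gain, profile_num, exponent.
  auto_derive.
  - repeat split; lra.
  - unfold Rminus, Rdiv. field. lra.
Qed.

Lemma profile_unique_max : exists vs, 0 < vs /\
  forall v, 0 < v -> v <> vs -> profile v < profile vs.
Proof.
  destruct profile_num_sign as [vs [hvs [hneg hpos]]].
  exists vs; split; auto. intros v hv hne.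
  destruct (Rlt_or_le v vs) as [hlt|hge].
  - destruct (MVT_cor2 profile (fun x => - profile_gain x * profile_num x) v vs hlt)
      as [x [hx1 hx2]].
    { intros x hx. apply derivable_profile. lra. }
    cbv beta in hx1.
    pose proof (profile_gain_pos x ltac:(lra)). pose proof (hneg x ltac:(lra)).
    assert (0 < profile_gain x * (- profile_num x) * (vs - v))
      by (apply Rmult_lt_0_compat; [apply Rmult_lt_0_compat|]; lra).
    lra.
  - destruct (MVT_cor2 profile (fun x => - profile_gain x * profile_num x) vs v ltac:(lra))
      as [x [hx1 hx2]].
    { intros x hx. apply derivable_profile. lra. }
    cbv beta in hx1.
    pose proof (profile_gain_pos x ltac:(lra)). pose proof (hpos x ltac:(lra)).
    assert (0 < profile_gain x * profile_num x * (v - vs))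
      by (apply Rmult_lt_0_compat; [apply Rmult_lt_0_compat|]; lra).
    lra.
Qed.

Lemma ratio_spec (u v : R) : 0 < v ->
  ratio u v * (u*u + (v+1+t)*(v+1+t)) = u*u + (v+1-t)*(v+1-t).
Proof. intros hv. unfold ratio. field. nra. Qed.

Lemma ratio_bounds (u v : R) : 0 < v -> 0 < ratio u v < 1.
Proof.
  intros hv. pose proof (ratio_spec u v hv).
  assert (0 < ratio u v) by (unfold ratio; apply Rdiv_lt_0_compat; nra).
  assert (u*u + (v+1-t)*(v+1-t) < u*u + (v+1+t)*(v+1+t)) by nra.
  split; [lra | nra].
Qed.

(* On the circle {ratio = r}, (1 - r) * exponent is a decreasing function of the height v. *)
Lemma exponent_level (r u v : R) : 0 < v ->
  r * (u*u + (v+1+t)*(v+1+t)) = u*u + (v+1-t)*(v+1-t) ->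
  (1 - r) * exponent u v = t * ((1-t) + r*(1+t)) / v - ((1-t) - r*(1+t)).
Proof.
  intros hv hr. unfold exponent.
  apply (Rmult_eq_reg_r (2*v)); [|lra].
  field_simplify; [|lra|lra]. nra.
Qed.

Lemma exponent_level_le (r u v u' v' : R) : 0 < r < 1 -> 0 < v <= v' ->
  r * (u*u + (v+1+t)*(v+1+t)) = u*u + (v+1-t)*(v+1-t) ->
  r * (u'*u' + (v'+1+t)*(v'+1+t)) = u'*u' + (v'+1-t)*(v'+1-t) ->
  exponent u' v' <= exponent u v /\ (v < v' -> exponent u' v' < exponent u v).
Proof.
  intros hr hv e e'.
  pose proof (exponent_level r u v ltac:(lra) e) as E.
  pose proof (exponent_level r u' v' ltac:(lra) e') as E'.
  assert (hK : 0 < t * ((1-t) + r*(1+t))) by nra.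
  set (K := t * ((1-t) + r*(1+t))) in *.
  assert (K / v' <= K / v) by (apply Rmult_le_compat_l; [lra | apply Rinv_le_contravar; lra]).
  split; [nra|].
  intros hlt.
  assert (K / v' < K / v) by (apply Rmult_lt_compat_l; [lra | apply Rinv_lt_contravar; nra]).
  nra.
Qed.

Definition axis_point (rho : R) : R := (rho*(1+t) - (1-t)) / (1 - rho).

Lemma axis_point_shift (rho : R) : rho < 1 ->
  axis_point rho + 1 - t = 2*t*rho / (1 - rho) /\ axis_point rho + 1 + t = 2*t / (1 - rho).
Proof. intros h. unfold axis_point. split; field; lra. Qed.

Lemma le_axis_point (u v rho : R) : 0 < v -> 0 < rho < 1 -> rho * rho = ratio u v ->
  v <= axis_point rho /\ (u <> 0 -> v < axis_point rho).
Proof.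
  intros hv hrho hrr. pose proof (ratio_spec u v hv) as e. rewrite <- hrr in e.
  destruct (axis_point_shift rho ltac:(lra)) as [hp hq].
  assert (htop : axis_point rho + 1 - t = rho * (axis_point rho + 1 + t)).
  { rewrite hp, hq. field. lra. }
  set (v' := axis_point rho) in *.
  assert (hq0 : 0 < rho * (v + 1 + t)) by nra.
  assert (hgap : (rho * (v+1+t)) * (rho * (v+1+t)) - (v+1-t) * (v+1-t) = (1 - rho*rho) * (u*u))
    by nra.
  assert (0 < 1 - rho*rho) by nra.
  split.
  - enough (v + 1 - t <= rho * (v + 1 + t)) by nra.
    apply Rsqr_incr_0_var; [unfold Rsqr | lra].
    assert (0 <= (1 - rho*rho) * (u*u)) by (apply Rmult_le_pos; nra). lra.
  - intros hu. assert (0 < u*u) by (destruct (Rlt_or_le 0 u); nra).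
    enough (v + 1 - t < rho * (v + 1 + t)) by nra.
    apply Rsqr_incrst_0; [unfold Rsqr | lra | lra].
    assert (0 < (1 - rho*rho) * (u*u)) by (apply Rmult_lt_0_compat; lra). lra.
Qed.

Lemma weight_axis (v : R) : 0 < v -> weight 0 v = profile v.
Proof.
  intros hv. unfold weight, profile, ratio.
  replace ((0*0 + (v+1-t)*(v+1-t)) / (0*0 + (v+1+t)*(v+1+t)))
    with (Rsqr ((v+1-t) / (v+1+t))) by (unfold Rsqr; field; lra).
  rewrite sqrt_Rsqr; [reflexivity|].
  apply Rlt_le, Rdiv_lt_0_compat; lra.
Qed.

(* Follow the level circle of ratio through (u, v) up to the axis u = 0. *)
Lemma weight_le_profile (u v : R) : 0 < v ->
  exists v', 0 < v' /\ weight u v <= profile v' /\ (u <> 0 -> weight u v < profile v').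
Proof.
  intros hv.
  pose proof (ratio_spec u v hv) as e. pose proof (ratio_bounds u v hv) as hr.
  set (r := ratio u v) in *.
  pose proof (sqrt_sqrt r ltac:(lra)) as hrho2.
  assert (hrho : 0 < sqrt r < 1).
  { split; [apply sqrt_lt_R0; lra|]. rewrite <- sqrt_1. apply sqrt_lt_1; lra. }
  set (rho := sqrt r) in *.
  destruct (le_axis_point u v rho hv hrho hrho2) as [hvv hvv'].
  destruct (axis_point_shift rho ltac:(lra)) as [hp hq].
  set (v' := axis_point rho) in *.
  assert (e' : r * (0*0 + (v'+1+t)*(v'+1+t)) = 0*0 + (v'+1-t)*(v'+1-t)).
  { rewrite hp, hq, <- hrho2. field. lra. }
  destruct (exponent_level_le r u v 0 v' hr ltac:(lra) e e') as [hE hE'].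
  assert (hw : weight u v = rho * exp (- c * exponent u v)) by reflexivity.
  assert (hpr : profile v' = rho * exp (- c * exponent 0 v')).
  { unfold profile. f_equal. rewrite hp, hq. field. split; lra. }
  exists v'. split; [lra|]. rewrite hw, hpr. split.
  - apply Rmult_le_compat_l; [lra|].
    destruct hE as [hE|hE]; [|rewrite hE; lra].
    apply Rlt_le, exp_increasing. nra.
  - intros hu. apply Rmult_lt_compat_l; [lra|].
    apply exp_increasing. pose proof (hE' (hvv' hu)). nra.
Qed.

Lemma weight_unique_max : exists vs, 0 < vs /\ forall u v, 0 < v ->
  weight u v <= weight 0 vs /\ (weight u v = weight 0 vs -> u = 0 /\ v = vs).
Proof.
  destruct profile_unique_max as [vs [hvs hmax]].
  assert (hprof : forall v, 0 < v -> profile v <= profile vs).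
  { intros v hv. destruct (Req_dec v vs) as [->|hne]; [lra|]. apply Rlt_le, hmax; auto. }
  exists vs. split; auto. intros u v hv.
  rewrite (weight_axis vs hvs).
  destruct (weight_le_profile u v hv) as [v' [hv' [hle hlt]]].
  pose proof (hprof v' hv').
  split; [lra|]. intros heq.
  destruct (Req_dec u 0) as [->|hu]; [|pose proof (hlt hu); lra].
  split; auto. rewrite weight_axis in heq by auto.
  destruct (Req_dec v vs) as [e|e]; auto.
  pose proof (hmax v hv e). lra.
Qed.

End Profile.

Lemma RtoC_conj (a : R) : Cconj (RtoC a) = RtoC a.
Proof. unfold Cconj, RtoC. simpl. f_equal. ring. Qed.

Lemma Cdiv_neq0 (a b : C) : a <> 0%C -> b <> 0%C -> (a / b)%C <> 0%C.
Proof. intros ha hb e. apply ha. transitivity (a / b * b)%C; [field; auto | rewrite e; ring]. Qed.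

Section Rotation.
Variable phi : R.

Definition rot_den (w : C) : C := (- RtoC (sin (phi / 2)) * w + RtoC (cos (phi / 2)))%C.

Lemma rot_coef_norm :
  (RtoC (cos (phi / 2)) * RtoC (cos (phi / 2))
   + RtoC (sin (phi / 2)) * RtoC (sin (phi / 2)))%C = 1%C.
Proof.
  rewrite <- !RtoC_mult, <- RtoC_plus.
  pose proof (sin2_cos2 (phi / 2)) as e. unfold Rsqr in e. rewrite Rplus_comm, e. reflexivity.
Qed.

Lemma rot_den_neq0 (w : C) : Im w <> 0 -> rot_den w <> 0%C.
Proof.
  intros h e. destruct w as [a b]. simpl in h. unfold rot_den in e.
  pose proof (f_equal fst e) as e1. pose proof (f_equal snd e) as e2. simpl in e1, e2.
  pose proof (sin2_cos2 (phi / 2)) as n. unfold Rsqr in n.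
  assert (hs : sin (phi / 2) = 0) by (apply (Rmult_eq_reg_r b); lra).
  rewrite hs in e1, n. nra.
Qed.

Lemma rot_i_sub (w1 w2 : C) : Im w1 <> 0 -> Im w2 <> 0 ->
  (rot_i phi w1 - rot_i phi w2 = (w1 - w2) / (rot_den w1 * rot_den w2))%C.
Proof.
  intros h1 h2. pose proof (rot_den_neq0 w1 h1). pose proof (rot_den_neq0 w2 h2).
  unfold rot_i. rewrite <- (Cmult_1_l (w1 - w2)), <- rot_coef_norm.
  unfold rot_den in *. field. auto.
Qed.

Lemma rot_den_conj (w : C) : Cconj (rot_den w) = rot_den (Cconj w).
Proof. unfold rot_den. rewrite Cplus_conj, Cmult_conj, Copp_conj, !RtoC_conj. reflexivity. Qed.

Lemma rot_i_conj (w : C) : Im w <> 0 -> Cconj (rot_i phi w) = rot_i phi (Cconj w).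
Proof.
  intros h. unfold rot_i. rewrite Cdiv_conj by (apply rot_den_neq0; auto).
  rewrite !Cplus_conj, !Cmult_conj, Copp_conj, !RtoC_conj. reflexivity.
Qed.

Lemma Im_rot_i (w : C) : Im w <> 0 -> Im (rot_i phi w) = Im w / Cmod (rot_den w) ^ 2.
Proof.
  intros h. pose proof (rot_den_neq0 w h) as hd. apply Cmod_gt_0 in hd.
  pose proof (pow_lt _ 2 hd) as hD.
  pose proof (sin2_cos2 (phi / 2)) as n. unfold Rsqr in n.
  destruct w as [a b]. unfold Cmod in hD |- *.
  rewrite pow2_sqrt in hD |- * by (apply Rplus_le_le_0_compat; apply pow2_ge_0).
  unfold rot_den, rot_i, Cdiv, Cmult, Cinv, Cplus, Copp, RtoC in hD |- *. simpl in hD |- *.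
  match goal with |- _ = b / ?D =>
    transitivity (b * (sin (phi/2) * sin (phi/2) + cos (phi/2) * cos (phi/2)) / D) end.
  - field. lra.
  - rewrite n. field. lra.
Qed.

Lemma rot_i_upper (w : C) : 0 < Im w -> 0 < Im (rot_i phi w).
Proof.
  intros h. rewrite Im_rot_i by lra. apply Rdiv_lt_0_compat; [lra|].
  apply pow_lt, Cmod_gt_0, rot_den_neq0. lra.
Qed.

End Rotation.

Lemma rot_i_inv (phi : R) (w : C) : Im w <> 0 -> rot_i phi (rot_i (- phi) w) = w.
Proof.
  intros h.
  assert (hs : sin (- phi / 2) = - sin (phi / 2)) by (rewrite <- sin_neg; f_equal; field).
  assert (hc : cos (- phi / 2) = cos (phi / 2)) by (rewrite <- cos_neg; f_equal; field).
  pose proof (rot_den_neq0 (- phi) w h) as hd. unfold rot_den in hd.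
  pose proof (rot_coef_norm phi) as n.
  unfold rot_i in *. rewrite hs, hc in *. rewrite RtoC_opp in *.
  set (s := RtoC (sin (phi / 2))) in *. set (co := RtoC (cos (phi / 2))) in *.
  assert (hn : (co * co + s * s)%C <> 0%C) by (rewrite n; apply C1_nz).
  transitivity ((co * co + s * s) * w / (co * co + s * s))%C.
  - field. auto.
  - field. auto.
Qed.

Section Isometry.
Variables x y phi : R.

Definition isom (w : C) : C := (RtoC x + RtoC y * rot_i phi w)%C.

Lemma isom_sub (w1 w2 : C) : Im w1 <> 0 -> Im w2 <> 0 ->
  (isom w1 - isom w2 = RtoC y * (w1 - w2) / (rot_den phi w1 * rot_den phi w2))%C.
Proof.
  intros h1 h2. unfold isom.
  transitivity (RtoC y * (rot_i phi w1 - rot_i phi w2))%C; [ring|].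
  rewrite rot_i_sub by auto. field.
  split; apply rot_den_neq0; auto.
Qed.

Lemma isom_sub_neq0 (w1 w2 : C) : y <> 0 -> Im w1 <> 0 -> Im w2 <> 0 -> w1 <> w2 ->
  (isom w1 - isom w2)%C <> 0%C.
Proof.
  intros hy h1 h2 h12. rewrite isom_sub by auto.
  assert (hyC : RtoC y <> 0%C) by (intro e; apply RtoC_inj in e; auto).
  apply Cdiv_neq0; apply Cmult_neq_0; auto using Cminus_eq_contra, rot_den_neq0.
Qed.

Lemma isom_conj (w : C) : Im w <> 0 -> Cconj (isom w) = isom (Cconj w).
Proof.
  intros h. unfold isom. rewrite Cplus_conj, Cmult_conj, !RtoC_conj, rot_i_conj by auto.
  reflexivity.
Qed.

Lemma Cmod_isom_sub (w1 w2 : C) : Im w1 <> 0 -> Im w2 <> 0 ->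
  Cmod (isom w1 - isom w2) =
  Rabs y * Cmod (w1 - w2) / (Cmod (rot_den phi w1) * Cmod (rot_den phi w2)).
Proof.
  intros h1 h2. rewrite isom_sub by auto.
  rewrite Cmod_div, !Cmod_mult, Cmod_R; [reflexivity|].
  apply Cmult_neq_0; apply rot_den_neq0; auto.
Qed.

Hypothesis hy : 0 < y.

Lemma isom_upper (w : C) : 0 < Im w -> 0 < Im (isom w).
Proof.
  intros h. unfold isom. rewrite im_plus, im_scal_l, im_RtoC.
  pose proof (rot_i_upper phi w h). nra.
Qed.

Lemma isom_preimage (z : C) : 0 < Im z -> exists u v, 0 < v /\ z = isom (u, v).
Proof.
  intros hz.
  set (z0 := ((z - RtoC x) / RtoC y)%C).
  assert (hyC : RtoC y <> 0%C) by (intro e; apply RtoC_inj in e; lra).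
  assert (hz0 : 0 < Im z0).
  { replace (Im z0) with (Im z / y); [apply Rdiv_lt_0_compat; auto|].
    unfold z0. destruct z as [zr zi].
    unfold RtoC, Cminus, Cplus, Copp, Cdiv, Cmult, Cinv. simpl. field. lra. }
  set (xi := rot_i (- phi) z0).
  assert (hxi : 0 < Im xi) by (apply rot_i_upper; auto).
  exists (Re xi), (Im xi). split; auto.
  replace (Re xi, Im xi) with xi by (destruct xi; reflexivity).
  unfold isom, xi. rewrite rot_i_inv by lra.
  unfold z0. field. auto.
Qed.

End Isometry.

Lemma isom_frame_inj (x1 y1 x2 y2 phi : R) (w : C) : 0 < Im w ->
  isom x1 y1 phi w = isom x2 y2 phi w -> x1 = x2 /\ y1 = y2.
Proof.
  intros h e. pose proof (rot_i_upper phi w h) as hr. unfold isom in e.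
  destruct (rot_i phi w) as [a b]. simpl in hr.
  pose proof (f_equal fst e) as f1. pose proof (f_equal snd e) as f2.
  unfold RtoC, Cplus, Cmult in f1, f2. simpl in f1, f2.
  assert (y1 = y2) by (apply (Rmult_eq_reg_r b); lra).
  split; [subst; lra | auto].
Qed.

Lemma isom_frame_exists (phi : R) (w z : C) : 0 < Im w -> 0 < Im z ->
  exists x y, 0 < y /\ z = isom x y phi w.
Proof.
  intros hw hz. pose proof (rot_i_upper phi w hw) as hr. unfold isom.
  destruct (rot_i phi w) as [a b]. simpl in hr.
  exists (Re z - Im z / b * a), (Im z / b). split; [apply Rdiv_lt_0_compat; auto|].
  destruct z as [zr zi]. unfold RtoC, Cplus, Cmult. simpl.
  apply injective_projections; simpl; field; lra.
Qed.

Lemma Ci_sq : (Ci * Ci = - 1)%C.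
Proof. unfold Ci, Cmult, RtoC, Copp. simpl. f_equal; ring. Qed.

Lemma Cmod_cexp (w : C) : Cmod (cexp w) = exp (Re w).
Proof.
  destruct w as [a b]. unfold Cmod, cexp, Re, Im. cbn [fst snd].
  transitivity (sqrt (exp a ^ 2)); [| apply sqrt_pow2, Rlt_le, exp_pos].
  f_equal. pose proof (sin2_cos2 b) as e. unfold Rsqr in e.
  transitivity (exp a ^ 2 * (sin b * sin b + cos b * cos b)); [ring|].
  rewrite e. ring.
Qed.

Lemma Cmod_K_eta (eta : R) (z : C) (P : C * C) : (Cconj z - PZ P)%C <> 0%C ->
  Cmod (K_eta eta z P) =
  Cmod (z - PZt P) / Cmod (Cconj z - PZ P) * exp (- c_eta eta * Re (cosh_dist z P)).
Proof.
  intros h. unfold K_eta. rewrite Cmod_mult, Cmod_div, Cmod_cexp by auto.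
  do 2 f_equal. unfold Re, Cmult, Copp, RtoC. simpl. ring.
Qed.

Definition cross_ratio (w a b : C) : C :=
  ((w - a) * (Cconj w - b) / ((w - Cconj w) * (a - b)))%C.

Lemma cosh_dist_cross_ratio (z : C) (P : C * C) : Im z <> 0 -> PZ P <> PZt P ->
  cosh_dist z P = (1 - 2 * cross_ratio z (PZ P) (PZt P))%C.
Proof.
  intros hz hP.
  assert (hY : PY P <> 0%C).
  { intro e. apply hP. unfold PZ, PZt. rewrite e. ring. }
  assert (hb : RtoC (Im z) <> 0%C) by (intro e; apply RtoC_inj in e; auto).
  assert (ez : z = (RtoC (Re z) + Ci * RtoC (Im z))%C).
  { destruct z as [a b]. unfold Ci, RtoC, Cmult, Cplus. apply injective_projections; simpl; ring. }
  assert (ezc : Cconj z = (RtoC (Re z) - Ci * RtoC (Im z))%C).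
  { destruct z as [a b]. unfold Ci, RtoC, Cmult, Cplus, Cminus, Copp, Cconj.
    apply injective_projections; simpl; ring. }
  unfold cosh_dist, cross_ratio, PZ, PZt. rewrite ezc.
  set (a := RtoC (Re z)) in *. set (b := RtoC (Im z)) in *.
  set (X := PX P). set (Y := PY P) in *.
  clearbody a b X Y. subst z.
  transitivity (1 - 2 * ((a - X) * (a - X) - Ci * Ci * ((b - Y) * (b - Y)))
                        / (4 * (Ci * Ci) * b * Y))%C.
  - rewrite Ci_sq. field. auto.
  - assert (h2i : forall w : C, w <> 0%C -> (2 * Ci * w)%C <> 0%C).
    { intros w hw. repeat apply Cmult_neq_0; auto using Ci_nz.
      intro e. apply (f_equal fst) in e. simpl in e. lra. }
    field.
    replace (X + Ci * Y - (X - Ci * Y))%C with (2 * Ci * Y)%C by ring.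
    replace (a + Ci * b - (a - Ci * b))%C with (2 * Ci * b)%C by ring.
    auto using Ci_nz.
Qed.

Lemma cross_ratio_isom (x y phi : R) (w a b : C) :
  y <> 0 -> Im w <> 0 -> Im a <> 0 -> Im b <> 0 -> a <> b ->
  cross_ratio (isom x y phi w) (isom x y phi a) (isom x y phi b) = cross_ratio w a b.
Proof.
  intros hy hw ha hb hab.
  assert (hwc : Im (Cconj w) <> 0) by (rewrite im_conj; intro e; apply hw; lra).
  assert (hww : (w - Cconj w)%C <> 0%C).
  { rewrite im_alt'. repeat apply Cmult_neq_0; auto using Ci_nz.
    - intro e. apply (f_equal fst) in e. simpl in e. lra.
    - intro e. apply RtoC_inj in e. auto. }
  assert (hyC : RtoC y <> 0%C) by (intro e; apply RtoC_inj in e; auto).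
  pose proof (rot_den_neq0 phi w hw). pose proof (rot_den_neq0 phi (Cconj w) hwc).
  pose proof (rot_den_neq0 phi a ha). pose proof (rot_den_neq0 phi b hb).
  unfold cross_ratio. rewrite isom_conj, !isom_sub by auto.
  assert (hab' : (a - b)%C <> 0%C).
  { intro e. apply hab. transitivity (a - b + b)%C; [ring | rewrite e; ring]. }
  field. auto 7.
Qed.

Lemma PZ_horo (s w : C) (theta : R) :
  PZ (horo s w theta) = isom (Re w) (Im w) (theta - PI) (- s + Ci)%C.
Proof. unfold PZ, PX, PY, horo, isom. simpl. field. apply Ci_nz. Qed.

Lemma PZt_horo (s w : C) (theta : R) :
  PZt (horo s w theta) = isom (Re w) (Im w) (theta - PI) (- s - Ci)%C.
Proof. unfold PZt, PX, PY, horo, isom. simpl. field. apply Ci_nz. Qed.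

Lemma Re_cross_ratio_axis (t u v : R) : v <> 0 ->
  Re (1 - 2 * cross_ratio (u, v) (0, 1 + t)%R (0, t - 1)%R)%C = exponent t u v.
Proof.
  intros hv. unfold cross_ratio, exponent, Cconj, Cdiv, Cinv, Cmult, Cminus, Cplus, Copp, RtoC, Re.
  simpl. field. split; [auto|].
  intro e. apply hv. assert (e2 : v * v = 0) by nra.
  apply Rmult_integral in e2. tauto.
Qed.

Lemma sqrt_ratio_Cmod (t u v : R) : 0 < t -> 0 < v ->
  sqrt (ratio t u v) = Cmod ((u, v) - (0, t - 1)) / Cmod (Cconj (u, v) - (0, 1 + t)).
Proof.
  intros ht hv. unfold ratio, Cmod, Cconj, Cminus, Cplus, Copp. simpl.
  rewrite sqrt_div_alt by nra. f_equal; f_equal; ring.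
Qed.


Lemma Cmod_K_eta_isom (eta x y phi : R) (z : C) (P : C * C) (xi a b : C) :
  0 < y -> 0 < Im xi -> Im a <> 0 -> Im b <> 0 -> Cconj xi <> a -> a <> b ->
  z = isom x y phi xi -> PZ P = isom x y phi a -> PZt P = isom x y phi b ->
  Cmod (K_eta eta z P) =
  Cmod (rot_den phi a) / Cmod (rot_den phi b) *
  (Cmod (xi - b) / Cmod (Cconj xi - a) * exp (- c_eta eta * Re (1 - 2 * cross_ratio xi a b)%C)).
Proof.
  intros hy hxi ha hb hxa hab hz hZ hZt.
  assert (hxic : Im (Cconj xi) <> 0) by (rewrite im_conj; lra).
  assert (hzc : Cconj z = isom x y phi (Cconj xi)) by (rewrite hz; apply isom_conj; lra).
  assert (hIz : Im z <> 0) by (rewrite hz; apply Rgt_not_eq, isom_upper; lra).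
  assert (hzZ : (Cconj z - PZ P)%C <> 0%C)
    by (rewrite hzc, hZ; apply isom_sub_neq0; auto; lra).
  assert (hZZ : PZ P <> PZt P).
  { rewrite hZ, hZt. intro e. apply (isom_sub_neq0 x y phi a b); auto; [lra|]. rewrite e. ring. }
  rewrite Cmod_K_eta, cosh_dist_cross_ratio, hZ, hZt, hzc, hz, cross_ratio_isom,
    !Cmod_isom_sub by (auto; lra).
  rewrite <- rot_den_conj, Cmod_conj, Rabs_pos_eq by lra.
  assert (hpos : forall p, Im p <> 0 -> 0 < Cmod (rot_den phi p))
    by (intros; apply Cmod_gt_0, rot_den_neq0; auto).
  pose proof (hpos a ha). pose proof (hpos b hb). pose proof (hpos xi ltac:(lra)).
  assert (0 < Cmod (Cconj xi - a)) by (apply Cmod_gt_0, Cminus_eq_contra; auto).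
  field. lra.
Qed.

Definition horo_scale (t phi : R) : R :=
  Cmod (rot_den phi (0, 1 + t)) / Cmod (rot_den phi (0, t - 1)).

Lemma Cmod_K_eta_horo (t eta theta : R) (w z : C) (u v : R) :
  0 < t < 1 -> 0 < Im w -> 0 < v -> z = isom (Re w) (Im w) (theta - PI) (u, v) ->
  Cmod (K_eta eta z (horo (- (Ci * RtoC t)) w theta)) =
  horo_scale t (theta - PI) * weight t (c_eta eta) u v.
Proof.
  intros ht hw hv hz.
  rewrite (Cmod_K_eta_isom eta (Re w) (Im w) (theta - PI) z _ (u, v) (0, 1 + t) (0, t - 1));
    try (simpl; lra); try (intro e; apply (f_equal snd) in e; simpl in e; lra); auto.
  - rewrite Re_cross_ratio_axis, <- sqrt_ratio_Cmod by lra. reflexivity.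
  - rewrite PZ_horo. f_equal. unfold Ci, RtoC, Cmult, Copp, Cplus.
    apply injective_projections; simpl; ring.
  - rewrite PZt_horo. f_equal. unfold Ci, RtoC, Cmult, Copp, Cplus, Cminus.
    apply injective_projections; simpl; ring.
Qed.

Lemma c_eta_pos (eta : R) : 0 < eta < 2 -> 0 < c_eta eta.
Proof. intros h. unfold c_eta. apply Rdiv_lt_0_compat; [lra|]. simpl. nra. Qed.

Lemma Cmod_K_eta_horo_coords (t eta theta : R) (z w : C) :
  0 < t < 1 -> 0 < Im z -> 0 < Im w ->
  exists u v, 0 < v /\ z = isom (Re w) (Im w) (theta - PI) (u, v) /\
    Cmod (K_eta eta z (horo (- (Ci * RtoC t)) w theta)) =
    horo_scale t (theta - PI) * weight t (c_eta eta) u v.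
Proof.
  intros ht hz hw.
  destruct (isom_preimage (Re w) (Im w) (theta - PI) hw z hz) as [u [v [hv hzv]]].
  exists u, v. repeat split; auto. apply Cmod_K_eta_horo; auto.
Qed.

Theorem lemma3 (t : R) (ht : 0 < t < 1) :
  exists delta : R, 0 < delta /\
    forall eta : R, Rabs (eta - t) < delta ->
    forall (theta : R) (z : C), 0 < Im z ->
      exists! P : C * C,
        Sigma t theta P /\
        forall Q : C * C, Sigma t theta Q ->
          Cmod (K_eta eta z Q) <= Cmod (K_eta eta z P).
Proof.
  exists (Rmin t (1 - t)). split; [apply Rmin_pos; lra|].
  intros eta heta theta z hz.
  assert (hc : 0 < c_eta eta).
  { apply c_eta_pos. apply Rabs_def2 in heta.
    pose proof (Rmin_l t (1 - t)). pose proof (Rmin_r t (1 - t)). lra. }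
  destruct (weight_unique_max t (c_eta eta) ht hc) as [vs [hvs hmax]].
  assert (hk : 0 < horo_scale t (theta - PI)).
  { apply Rdiv_lt_0_compat; apply Cmod_gt_0, rot_den_neq0; simpl; lra. }
  destruct (isom_frame_exists (theta - PI) (0, vs) z ltac:(simpl; lra) hz)
    as [xs [ys [hys hzs]]].
  pose proof (Cmod_K_eta_horo t eta theta (xs, ys) z 0 vs ht hys hvs hzs) as hKs.
  exists (horo (- (Ci * RtoC t)) (xs, ys) theta). split; [split|].
  - exists (xs, ys). auto.
  - intros Q [w [hw ->]].
    destruct (Cmod_K_eta_horo_coords t eta theta z w ht hz hw) as [u [v [hv [_ ->]]]].
    rewrite hKs. apply Rmult_le_compat_l; [lra|]. apply hmax; auto.
  - intros P [[w [hw ->]] hP].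
    destruct (Cmod_K_eta_horo_coords t eta theta z w ht hz hw) as [u [v [hv [hzw hKw]]]].
    specialize (hP _ (ex_intro _ (xs, ys) (conj hys eq_refl))).
    rewrite hKs, hKw in hP. apply (Rmult_le_reg_l _ _ _ hk) in hP.
    destruct (hmax u v hv) as [hle [-> ->]]; [lra|].
    destruct (isom_frame_inj xs ys (Re w) (Im w) (theta - PI) (0, vs)) as [-> ->].
    + simpl. lra.
    + rewrite <- hzs. exact hzw.
    + destruct w. reflexivity.
Qed.
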